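(* Let $N\ge2$. In the pair distinguishability task, Alice receives $x\in\{1,\dots,N\}$ uniformly at random, and Bob receives a pair $(x_1,x_2)$ with $1\le x_1<x_2\le N$ and the promise that Alice's input lies in $\{x_1,x_2\}$; Bob outputs $z\in\{1,\dots,N\}$ aiming to guess Alice's input. The success metric is $$\mathcal{S}(N)=\frac{1}{N(N-1)}\sum_{1\le x<x'\le N}\big[p(x|x,(x,x'))+p(x'|x',(x,x'))\big].$$ For a classical protocol with encoding $p_e(m|x)$ (messages $m$ from a finite set of arbitrary size) and decoding $p_d(z|y,m)$, so that $p(z|x,y)=\sum_mp_e(m|x)p_d(z|y,m)$, let $\mathcal{S}_C(N)$ be its success metric and $\mathcal{D}_C=\frac1N\sum_m\max_xp_e(m|x)$ its distinguishability. Then every classical protocol satisfies $$(N-1)\big(\mathcal{S}_C(N)-1\big)+1\le\mathcal{D}_C.$$ *)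

From mathcomp Require Import all_boot all_order all_algebra.
Set Implicit Arguments. Unset Strict Implicit. Unset Printing Implicit Defensive.
Import Order.TTheory GRing.Theory Num.Theory.
Local Open Scope ring_scope.

(* Alice's inputs x in {1..N} are modelled by 'I_N (i.e. {0..N-1}).
   Bob's input is a pair (x1,x2) with x1 < x2; decoding is given as a
   function of x1, x2 but only its values on pairs with x1 < x2 matter. *)

Definition is_encoding (R : numDomainType) (N : nat) (M : finType)
  (pe : 'I_N -> M -> R) : Prop :=
  (forall x m, 0 <= pe x m) /\ (forall x, \sum_(m : M) pe x m = 1).

Definition is_decoding (R : numDomainType) (N : nat) (M : finType)
  (pd : 'I_N -> 'I_N -> M -> 'I_N -> R) : Prop :=
  forall x1 x2 : 'I_N, (x1 < x2)%N ->
    (forall m z, 0 <= pd x1 x2 m z) /\ (forall m, \sum_(z < N) pd x1 x2 m z = 1).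

Definition behaviour (R : numDomainType) (N : nat) (M : finType)
  (pe : 'I_N -> M -> R) (pd : 'I_N -> 'I_N -> M -> 'I_N -> R)
  (z x x1 x2 : 'I_N) : R :=
  \sum_(m : M) pe x m * pd x1 x2 m z.

Definition success (R : numFieldType) (N : nat) (M : finType)
  (pe : 'I_N -> M -> R) (pd : 'I_N -> 'I_N -> M -> 'I_N -> R) : R :=
  (N%:R * (N%:R - 1))^-1 *
  \sum_(x < N) \sum_(x' < N | (x < x')%N)
     (behaviour pe pd x x x x' + behaviour pe pd x' x' x x').

Definition distinguishability (R : numFieldType) (N : nat) (M : finType)
  (pe : 'I_N -> M -> R) : R :=
  N%:R^-1 * \sum_(m : M) \big[Num.max/0]_(x < N) pe x m.

From mathcomp Require Import all_boot all_order all_algebra.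
From mathcomp Require Import ring lra.
Import Order.TTheory GRing.Theory Num.Theory.
Local Open Scope ring_scope.

(* Fix a message m and write a_x = p_e(m|x).  On the pair {x, x'} Bob's guess
   contributes a_x p_d(x|..) + a_x' p_d(x'|..) <= max(a_x, a_x').  If k maximises
   a, this maximum is a_k on the N - 1 pairs containing k and at most a_x + a_x'
   on the others, so the sum over pairs is at most max_x a_x + (N - 2) sum_x a_x.
   Summing over m with sum_m p_e(m|x) = 1 gives
   N (N - 1) S_C <= N D_C + N (N - 2), which rearranges to the claim. *)

Lemma sum_ltn_pairs_sym (V : zmodType) (N : nat) (g : 'I_N -> 'I_N -> V) :
  \sum_(x < N) \sum_(x' < N | (x < x')%N) (g x x' + g x' x) =
  \sum_(x < N) \sum_(x' < N | x' != x) g x x'.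
Proof.
have swap : \sum_(x < N) \sum_(x' < N | (x < x')%N) g x' x =
            \sum_(x < N) \sum_(x' < N | (x' < x)%N) g x x'.
  under eq_bigr => x _ do rewrite big_mkcond /=.
  by rewrite exchange_big; apply: eq_bigr => x _; rewrite [RHS]big_mkcond.
under eq_bigr => x _ do rewrite big_split /=.
rewrite big_split /= swap -big_split; apply: eq_bigr => x _ /=.
rewrite big_mkcond [X in _ + X]big_mkcond [RHS]big_mkcond -big_split.
apply: eq_bigr => x' _ /=.
by case: ltngtP => [lt|gt|/val_inj->]; rewrite ?eqxx ?addr0 ?add0r // neq_ltn ?lt ?gt ?orbT.
Qed.

Lemma lerD_pair_sum (R : numDomainType) (I : finType) (F : I -> R) (i j : I) :
  i != j -> (forall t, 0 <= F t) -> F i + F j <= \sum_t F t.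
Proof.
move=> ij F0; rewrite (bigD1 i) //= (bigD1 j) /=; last by rewrite eq_sym.
by rewrite addrA lerDl sumr_ge0.
Qed.

Section PairSums.
Variables (R : realFieldType) (N : nat).

Lemma sum_neq_indicator (x k : 'I_N) :
  \sum_(x' < N | x' != x) (x' != k)%:R = N%:R - 2 + (x == k)%:R :> R.
Proof.
have all_but_k : \sum_(x' < N) (x' != k)%:R = N%:R - 1 :> R.
  rewrite (bigD1 k) //= eqxx add0r.
  rewrite (eq_bigr (fun=> 1)) => [|x' /negbTE->//].
  rewrite sumr_const cardC1 card_ord.
  by case: N k => [[]//|n k]; rewrite -natr1 addrK.
move: all_but_k; rewrite (bigD1 x) //= => /eqP; rewrite addrC -subr_eq => /eqP <-.
by case: eqP => _ /=; lra.
Qed.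

Lemma max_le_off_argmax (a : 'I_N -> R) (k x x' : 'I_N) :
  (forall y, 0 <= a y) -> (forall y, a y <= a k) -> x != x' ->
  Num.max (a x) (a x') <= a x * (x' != k)%:R + a x' * (x != k)%:R.
Proof.
move=> a0 ak; have := a0 x; have := a0 x'; have := ak x; have := ak x'.
case: (eqVneq x k) => [->|_]; case: (eqVneq x' k) => [->|_] //=;
  rewrite ?mulr1 ?mulr0 ?addr0 ?add0r => *; rewrite ge_max; lra.
Qed.

Lemma sum_pairs_max_le (a : 'I_N -> R) : (0 < N)%N -> (forall y, 0 <= a y) ->
  \sum_(x < N) \sum_(x' < N | (x < x')%N) Num.max (a x) (a x')
    <= \big[Num.max/0]_(y < N) a y + (N%:R - 2) * \sum_(y < N) a y.
Proof.
move=> N0 a0.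
have [k _ maxE] := eq_bigmax (Ordinal N0) xpredT a isT (fun y _ => a0 y).
have ak y : a y <= a k by rewrite -maxE le_bigmax.
apply: (le_trans (y := \sum_(x < N) \sum_(x' < N | (x < x')%N)
          (a x * (x' != k)%:R + a x' * (x != k)%:R))).
  apply: ler_sum => x _; apply: ler_sum => x' lt_xx'.
  by apply: max_le_off_argmax; rewrite // neq_ltn lt_xx'.
rewrite sum_ltn_pairs_sym maxE.
under eq_bigr => x _ do rewrite -mulr_sumr sum_neq_indicator mulrDr.
rewrite big_split /= -mulr_suml mulrC addrC lerD2r.
rewrite (bigD1 k) //= eqxx mulr1 big1 ?addr0 // => x /negbTE->.
by rewrite mulr0.
Qed.

Lemma mixture_le_max (u v s t : R) : 0 <= u -> 0 <= s -> 0 <= t -> s + t <= 1 ->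
  u * s + v * t <= Num.max u v.
Proof.
move=> u0 s0 t0 st1.
have m0 : 0 <= Num.max u v by rewrite le_max u0.
apply: (le_trans (y := Num.max u v * s + Num.max u v * t)).
  by apply: lerD; apply: ler_wpM2r; rewrite // le_max lexx ?orbT.
by rewrite -mulrDr ler_piMr.
Qed.

Lemma sum_pair_guess_le (a : 'I_N -> R) (q : 'I_N -> 'I_N -> 'I_N -> R) :
  (0 < N)%N -> (forall y, 0 <= a y) ->
  (forall x x' : 'I_N, (x < x')%N ->
     (forall z, 0 <= q x x' z) /\ \sum_(z < N) q x x' z = 1) ->
  \sum_(x < N) \sum_(x' < N | (x < x')%N) (a x * q x x' x + a x' * q x x' x')
    <= \big[Num.max/0]_(y < N) a y + (N%:R - 2) * \sum_(y < N) a y.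
Proof.
move=> N0 a0 qP; apply: le_trans (sum_pairs_max_le _ N0 a0).
apply: ler_sum => x _; apply: ler_sum => x' lt_xx'.
have [q0 q1] := qP x x' lt_xx'.
apply: mixture_le_max => //; rewrite -q1 lerD_pair_sum //.
by rewrite neq_ltn lt_xx'.
Qed.
End PairSums.

Lemma success_sum_by_message (R : numDomainType) (N : nat) (M : finType)
    (pe : 'I_N -> M -> R) (pd : 'I_N -> 'I_N -> M -> 'I_N -> R) :
  \sum_(x < N) \sum_(x' < N | (x < x')%N)
     (behaviour pe pd x x x x' + behaviour pe pd x' x' x x') =
  \sum_(m : M) \sum_(x < N) \sum_(x' < N | (x < x')%N)
     (pe x m * pd x x' m x + pe x' m * pd x x' m x').
Proof.
rewrite exchange_big /=; apply: eq_bigr => x _.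
rewrite exchange_big /=; apply: eq_bigr => x' _.
by rewrite big_split.
Qed.

Theorem theorem7 (R : realFieldType) (N : nat) (M : finType)
  (pe : 'I_N -> M -> R) (pd : 'I_N -> 'I_N -> M -> 'I_N -> R) :
  (2 <= N)%N -> is_encoding pe -> is_decoding pd ->
  (N%:R - 1) * (success pe pd - 1) + 1 <= distinguishability pe.
Proof.
move=> N2 [pe0 pe1] pdP; have N0 : (0 < N)%N by apply: leq_trans N2.
have N2R : 2 <= N%:R :> R by rewrite (ler_nat R 2).
rewrite /success /distinguishability success_sum_by_message.
set s := \sum_(m : M) _; set d := \sum_(m : M) _.
have s_le : s <= d + (N%:R - 2) * N%:R.
  apply: (le_trans (y := \sum_(m : M) (\big[Num.max/0]_(y < N) pe y m +
                         (N%:R - 2) * \sum_(y < N) pe y m))).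
    apply: ler_sum => m _.
    apply: (@sum_pair_guess_le R N (pe^~ m) (fun x x' => pd x x' m)) => // x x'.
    by move=> /pdP[pd0 pd1]; split=> [z|]; [exact: pd0 | exact: pd1].
  rewrite big_split /= -mulr_sumr exchange_big /= lerD2l.
  by rewrite (eq_bigr _ (fun y _ => pe1 y)) sumr_const card_ord -mulr_natr.
have -> : (N%:R - 1) * ((N%:R * (N%:R - 1))^-1 * s - 1) + 1 =
          N%:R^-1 * (s - (N%:R - 2) * N%:R) :> R.
  by field; apply/andP; split; lra.
by rewrite ler_wpM2l ?invr_ge0 ?ler0n //; lra.
Qed.
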